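(* Let $i,j\in J$ be two jobs with $\varphi_i(0)>\varphi_j(0)$, $w_ip_j\neq w_jp_i$ and $t^*_{ij}\in(0,T)$, and let $S$ be a complete schedule with $t_j\notin[t^*_{ij},t^*_{ij}+p_j)$. (1) If $t_i<t^*_{ij}$ and job $j$ is processed before job $i$ in $S$, then $S$ is not a potential schedule. (2) If $t_i\ge t^*_{ij}+p_j$ and job $i$ is processed before job $j$ in $S$, then $S$ is not a potential schedule.
   Context: $J$ is a finite set of jobs; job $j$ has processing time $p_j>0$ and weight $w_j>0$; $T=\sum_{j\in J}p_j$. A complete schedule is an ordering of $J$ processed consecutively without idle time from time $0$; job $j$ has start time $t_j$. For $t\ge 0$, $\varphi_j(t)=\frac{w_j}{p_j(p_j+t)}$. For jobs $i,j$ with $w_ip_j\neq w_jp_i$, $t^*_{ij}=\frac{w_jp_i^2-w_ip_j^2}{w_ip_j-w_jp_i}$ (the unique real $t$ with $\varphi_i(t)=\varphi_j(t)$). Dominance rule: for an interval $I\subseteq[0,\infty)$, the relation ''$i$ dominates $j$ on $I$'' is violated by a schedule if $j$ is processed before $i$ and both $t_j\in I$ and $t_i-p_j\in I$. The rule contains, for each pair of distinct jobs $i,j$ with $(p_i,w_i)\ne(p_j,w_j)$: (1) if $\varphi_i(t)\ge\varphi_j(t)$ for all $t\ge 0$, ''$i$ dominates $j$ on $[0,\infty)$''; (2) otherwise, if $\varphi_j(t)\ge\varphi_i(t)$ for all $t\ge0$, ''$j$ dominates $i$ on $[0,\infty)$''; (3) otherwise, labelling the pair so that $\varphi_i(0)>\varphi_j(0)$,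 $t^*_{ij}>0$ is defined and the rule contains ''$i$ dominates $j$ on $[0,t^*_{ij})$'' and ''$j$ dominates $i$ on $[t^*_{ij},\infty)$''. A complete schedule is a potential schedule if it violates no relation of the rule. *)

From HB Require Import structures.
From mathcomp Require Import all_boot all_order all_algebra.
Set Implicit Arguments. Unset Strict Implicit. Unset Printing Implicit Defensive.
Import Order.TTheory GRing.Theory Num.Theory.
Local Open Scope ring_scope.

Section Sched.
Variables (R : realFieldType) (J : finType) (p w : J -> R).

Definition total_time : R := \sum_(j : J) p j.

Definition phi (j : J) (t : R) : R := w j / (p j * (p j + t)).

Definition tstar (i j : J) : R :=
  (w j * p i ^+ 2 - w i * p j ^+ 2) / (w i * p j - w j * p i).

Definition complete_schedule (s : seq J) : Prop := perm_eq s (enum J).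

Definition start (s : seq J) (j : J) : R :=
  \sum_(k <- take (index j s) s) p k.

Definition before (s : seq J) (a b : J) : Prop := (index a s < index b s)%N.

(* The relation "a dominates b on I" is violated by s. *)
Definition violates (s : seq J) (a b : J) (I : R -> Prop) : Prop :=
  before s b a /\ I (start s b) /\ I (start s a - p b).

Inductive rule_contains : J -> J -> (R -> Prop) -> Prop :=
| rule_case1 (i j : J) :
    i <> j -> (p i, w i) <> (p j, w j) ->
    (forall t, 0 <= t -> phi j t <= phi i t) ->
    rule_contains i j (fun t => 0 <= t)
| rule_case2 (i j : J) :
    i <> j -> (p i, w i) <> (p j, w j) ->
    ~ (forall t, 0 <= t -> phi j t <= phi i t) ->
    (forall t, 0 <= t -> phi i t <= phi j t) ->
    rule_contains j i (fun t => 0 <= t)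
| rule_case3a (i j : J) :
    i <> j -> (p i, w i) <> (p j, w j) ->
    ~ (forall t, 0 <= t -> phi j t <= phi i t) ->
    ~ (forall t, 0 <= t -> phi i t <= phi j t) ->
    phi j 0 < phi i 0 ->
    rule_contains i j (fun t => 0 <= t < tstar i j)
| rule_case3b (i j : J) :
    i <> j -> (p i, w i) <> (p j, w j) ->
    ~ (forall t, 0 <= t -> phi j t <= phi i t) ->
    ~ (forall t, 0 <= t -> phi i t <= phi j t) ->
    phi j 0 < phi i 0 ->
    rule_contains j i (fun t => tstar i j <= t).

Definition potential (s : seq J) : Prop :=
  complete_schedule s /\
  forall a b I, rule_contains a b I -> ~ violates s a b I.

End Sched.

From HB Require Import structures.
From mathcomp Require Import all_boot all_order all_algebra.
From mathcomp Require Import ring lra.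
Set Implicit Arguments. Unset Strict Implicit. Unset Printing Implicit Defensive.
Import Order.TTheory GRing.Theory Num.Theory.
Local Open Scope ring_scope.

(* Clearing denominators, phi_i t - phi_j t has the sign of the affine function
   (w_i p_j - w_j p_i) (t - t*_ij); when phi_i 0 > phi_j 0 and t*_ij > 0 this
   forces w_i p_j < w_j p_i, so phi_i >= phi_j exactly on [0, t*_ij] and the pair
   falls under case (3) of the rule.  If j precedes i and t_i < t*_ij, then
   0 <= t_j <= t_i - p_j < t*_ij, violating "i dominates j on [0, t*_ij[";
   if i precedes j and t_i >= t*_ij + p_j, then t*_ij <= t_i <= t_j - p_i,
   violating "j dominates i on [t*_ij, oo[". *)

Section Crossing.
Variables (R : realFieldType) (J : finType) (p w : J -> R).
Hypothesis p_gt0 : forall j, 0 < p j.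

Lemma start_ge0 s a : 0 <= start p s a.
Proof. by apply: sumr_ge0 => k _; exact: ltW. Qed.

Lemma start_before s a b : before s a b -> start p s a + p a <= start p s b.
Proof.
rewrite /before /start => ab.
have a_s : (index a s < size s)%N by apply: leq_trans ab (index_size _ _).
rewrite -(subnKC ab) takeD big_cat (take_nth a a_s) nth_index -?index_mem //.
rewrite -cats1 big_cat big_seq1 /= lerDl.
by apply: sumr_ge0 => k _; exact: ltW.
Qed.

Lemma violates_before_threshold s a b c :
  before s b a -> start p s a < c -> violates p s a b (fun t => 0 <= t < c).
Proof.
move=> ba ta_c; have := start_before ba; have := start_ge0 s b.
have := p_gt0 b => pb_gt0 tb_ge0 tb_le.
by split=> //; split; apply/andP; split; lra.
Qed.

Lemma violates_after_threshold s a b c :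
  before s b a -> c <= start p s b -> violates p s a b (fun t => c <= t).
Proof.
move=> ba c_tb; have := start_before ba => tb_le.
by split=> //; split; lra.
Qed.

Lemma phi_sub_mul_denom i j t : 0 <= t -> w i * p j != w j * p i ->
  (phi p w i t - phi p w j t) * (p i * p j * (p i + t) * (p j + t)) =
  (w i * p j - w j * p i) * (t - tstar p w i j).
Proof.
move=> t_ge0 hne; have := p_gt0 i; have := p_gt0 j => pj_gt0 pi_gt0.
rewrite /phi /tstar; field.
rewrite subr_eq0 hne !gt_eqF //; lra.
Qed.

Lemma phi_denom_gt0 i j t : 0 <= t -> 0 < p i * p j * (p i + t) * (p j + t).
Proof.
move=> t_ge0; have := p_gt0 i; have := p_gt0 j => pj_gt0 pi_gt0.
by rewrite !mulr_gt0 //; lra.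
Qed.

Section TwoJobs.
Variables i j : J.
Hypothesis phi0_lt : phi p w j 0 < phi p w i 0.
Hypothesis hne : w i * p j != w j * p i.
Hypothesis tstar_gt0 : 0 < tstar p w i j.

Lemma crossing_coef_lt0 : w i * p j - w j * p i < 0.
Proof.
have := phi_sub_mul_denom (lexx 0) hne; have := phi_denom_gt0 i j (lexx 0).
set Q := _ * _ * _ * _; move=> Q_gt0 eq0.
have : 0 < (phi p w i 0 - phi p w j 0) * Q by rewrite mulr_gt0 // subr_gt0.
by rewrite eq0 sub0r mulrN oppr_gt0 pmulr_llt0.
Qed.

Lemma phi_le_tstar t : 0 <= t -> (phi p w j t <= phi p w i t) = (t <= tstar p w i j).
Proof.
move=> t_ge0; have := phi_sub_mul_denom t_ge0 hne.
have := phi_denom_gt0 i j t_ge0; have := crossing_coef_lt0.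
move=> D_lt0 Q_gt0 eqQ.
by rewrite -subr_ge0 -(pmulr_lge0 _ Q_gt0) eqQ nmulr_rge0 // subr_le0.
Qed.

Lemma rule_contains_crossing :
  rule_contains p w i j (fun t => 0 <= t < tstar p w i j) /\
  rule_contains p w j i (fun t => tstar p w i j <= t).
Proof.
have ij : i <> j by move=> E; move: phi0_lt; rewrite E ltxx.
have pw_ij : (p i, w i) <> (p j, w j).
  by case=> Ep Ew; move: phi0_lt; rewrite /phi Ep Ew ltxx.
have not_i_dom : ~ (forall t, 0 <= t -> phi p w j t <= phi p w i t).
  have t1_ge0 : 0 <= tstar p w i j + 1 by apply: addr_ge0; rewrite ?ltW.
  by move=> /(_ _ t1_ge0); rewrite phi_le_tstar //; lra.
have not_j_dom : ~ (forall t, 0 <= t -> phi p w i t <= phi p w j t).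
  by move=> /(_ 0 (lexx 0)); rewrite leNgt phi0_lt.
by split; [apply: rule_case3a | apply: rule_case3b].
Qed.

End TwoJobs.
End Crossing.

Theorem lemma3 (R : realFieldType) (J : finType) (p w : J -> R)
  (hp : forall j, 0 < p j) (hw : forall j, 0 < w j)
  (i j : J) (s : seq J)
  (hphi : phi p w j 0 < phi p w i 0)
  (hne : w i * p j != w j * p i)
  (ht0 : 0 < tstar p w i j) (htT : tstar p w i j < total_time p)
  (hs : complete_schedule s)
  (htj : ~ (tstar p w i j <= start p s j < tstar p w i j + p j)) :
  (start p s i < tstar p w i j -> before s j i -> ~ potential p w s) /\
  (tstar p w i j + p j <= start p s i -> before s i j -> ~ potential p w s).
Proof.
have [rule_ij rule_ji] := rule_contains_crossing hp hphi hne ht0.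
split=> [ti_lt ji [_ no_violation] | ti_ge ij [_ no_violation]].
- exact: no_violation _ _ _ rule_ij (violates_before_threshold hp ji ti_lt).
- apply: no_violation _ _ _ rule_ji (violates_after_threshold hp ij _).
  by have := hp j; lra.
Qed.
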